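(* Let $m,n\ge 0$ be integers with $m-n\equiv 0\pmod 2$, and put $N=m+n$. Let $1<p,q,r<\infty$ satisfy $\frac1r=\frac1p+\frac1q-1$. Then $$\left(\frac{2}{r+1}+\sum_{j=0}^{N-1}\frac{\binom{N}{j+1}^{r+1}-\binom{N}{j}^{r+1}}{(r+1)\left[\binom{N}{j+1}-\binom{N}{j}\right]}\right)^{1/r} \le \Big(\sum_{j=0}^{m}\binom{m}{j}^q\Big)^{1/q}\Big(\sum_{j=0}^{n}\binom{n}{j}^p\Big)^{1/p}.$$ (Since $N$ is even, $\binom{N}{j+1}\ne\binom{N}{j}$ for all $0\le j\le N-1$, so all denominators are nonzero.)
   Context: Binomial coefficients have their usual meaning. *)

From HB Require Import structures.
From mathcomp Require Import all_boot all_order all_algebra.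
From mathcomp Require Import all_classical all_reals all_analysis.
Set Implicit Arguments. Unset Strict Implicit. Unset Printing Implicit Defensive.

From HB Require Import structures.
From mathcomp Require Import all_boot all_order all_algebra.
From mathcomp Require Import all_classical all_reals all_analysis.
From mathcomp Require Import ring lra.

(* Vandermonde's identity exhibits row m + n of Pascal's triangle as the
   convolution of rows m and n, so Young's convolution inequality on nat,
   obtained coefficientwise from a three-exponent Hoelder inequality, bounds
   (\sum_k C(m+n,k)^r)^(1/r) by the right-hand side.  On the left, each summand
   is the mean value of t^r between two consecutive binomials, which the
   Hermite-Hadamard inequality for the convex t^r bounds by the trapezoid
   (C(m+n,j)^r + C(m+n,j+1)^r)/2; these add up to \sum_k C(m+n,k)^r - 1, and
   2/(r+1) <= 1. *)

Set Implicit Arguments.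
Unset Strict Implicit.
Unset Printing Implicit Defensive.
Import Order.TTheory GRing.Theory Num.Theory.
Local Open Scope ring_scope.

Section powR_inequalities.
Variable R : realType.
Implicit Types a b c p q r s t x y : R.

Lemma weighted_amgm a b t : 0 <= a -> 0 <= b -> 0 < t < 1 ->
  a `^ t * b `^ (1 - t) <= t * a + (1 - t) * b.
Proof.
move=> a0 b0 /andP[t0 t1].
have t1' : 0 < 1 - t by rewrite subr_gt0.
have := @conjugate_powR _ (a `^ t) (b `^ (1 - t)) t^-1 (1 - t)^-1
  (powR_ge0 _ _) (powR_ge0 _ _).
rewrite !invr_gt0 t0 t1' !invrK addrC subrK => /(_ erefl erefl erefl).
rewrite -!powRrM !mulfV ?gt_eqF // !powRr1 //.
by rewrite [t * a]mulrC [(1 - t) * b]mulrC.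
Qed.

Lemma powR_tangent_le y t r : 0 < y -> 0 < t -> 1 < r ->
  r * y * t `^ (r - 1) <= y `^ r + (r - 1) * t `^ r.
Proof.
move=> y0 t0 r1.
have r0 : 0 < r by rewrite (lt_trans _ r1).
have rr : r * (1 - r^-1) = r - 1 by rewrite mulrBr mulr1 mulfV ?gt_eqF.
have r01 : 0 < r^-1 < 1 by rewrite invr_gt0 r0 invf_lt1.
have := weighted_amgm (powR_ge0 y r) (powR_ge0 t r) r01.
rewrite -!powRrM mulfV ?gt_eqF // (powRr1 (ltW y0)) rr => /(ler_wpM2l (ltW r0)).
by rewrite mulrA mulrDr !mulrA mulfV ?gt_eqF // mul1r rr.
Qed.

(* phi t = (r+1)(t-y)(t^r+y^r) - 2 t^(r+1) vanishes at y and is nondecreasing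
   on [y, x]: its derivative is (r+1)(y^r + (r-1) t^r - r y t^(r-1)). *)
Lemma powR_increment_le_trapezoid x y r : 0 < y -> y < x -> 1 < r ->
  2 * (x `^ (r + 1) - y `^ (r + 1)) <= (r + 1) * (x - y) * (x `^ r + y `^ r).
Proof.
move=> y0 yx r1.
pose phi t := (r + 1) * ((t - y) * (t `^ r + y `^ r)) - 2 * t `^ (r + 1).
pose dphi t := (r + 1) * (y `^ r + (r - 1) * t `^ r - r * y * t `^ (r - 1)).
have phi_derive t : 0 < t -> is_derive t 1 phi (dphi t).
  move=> t0; have := is_derive1_powR r t0; have := is_derive1_powR (r + 1) t0.
  move=> D1 D2; apply: is_derive_eq.
  rewrite /dphi addrK -(mulr_powRB1 (ltW t0) (lt_trans ltr01 r1)).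
  by rewrite addr0 subr0 /GRing.scale /=; ring.
have dphi_ge0 t : 0 < t -> 0 <= dphi t.
  move=> t0; apply: mulr_ge0; first lra.
  by rewrite subr_ge0 powR_tangent_le.
have pos u : u \in `]y, x[ -> 0 < u.
  by rewrite in_itv /= => /andP[yu _]; apply: lt_trans yu.
have phi_derivable u : u \in `]y, x[ -> derivable phi u 1.
  by move=> /pos/phi_derive[].
have derive1_phi_ge0 u : u \in `]y, x[ -> 0 <= derive1 phi u.
  by move=> /pos u0; rewrite derive1E; have [_ ->] := phi_derive u u0; exact: dphi_ge0.
have phi_derivable_cc : {in `[y, x], forall u, derivable phi u 1}.
  move=> u; rewrite in_itv /= => /andP[yu _].
  by have [] := phi_derive u (lt_le_trans y0 yu).
have := ger0_derive1_ndecr phi_derivable derive1_phi_ge0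
  (derivable_within_continuous phi_derivable_cc)
  (lexx y) (ltW yx) (lexx x).
rewrite /phi subrr mul0r mulr0 add0r; lra.
Qed.

Lemma hermite_hadamard_powR x y r : 0 < x -> 0 < y -> 1 < r ->
  0 <= (x `^ (r + 1) - y `^ (r + 1)) / ((r + 1) * (x - y)) <= (x `^ r + y `^ r) / 2.
Proof.
move=> x0 y0 r1.
wlog yx : x y x0 y0 / y <= x.
  move=> hw; have [|xy] := leP y x; first exact: hw.
  have := hw y x y0 x0 (ltW xy).
  by rewrite -(opprB x y) -(opprB (x `^ _)) mulrN invrN mulrNN [y `^ r + _]addrC.
move: yx; rewrite le_eqVlt => /predU1P[->|yx].
  rewrite !subrr mulr0 invr0 mulr0 lexx /=.
  by rewrite divr_ge0 ?addr_ge0 ?powR_ge0 ?ler0n.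
have D0 : 0 < (r + 1) * (x - y) by rewrite mulr_gt0 ?subr_gt0 //; lra.
have N0 : y `^ (r + 1) < x `^ (r + 1).
  by rewrite gt0_ltr_powR ?nnegrE ?ltW //; lra.
apply/andP; split; first by apply: divr_ge0; [rewrite subr_ge0 ltW | exact: ltW].
have := powR_increment_le_trapezoid y0 yx r1.
rewrite ler_pdivrMr //; lra.
Qed.

Lemma hoelder_sum (I : finType) (x y : I -> R) t :
  (forall i, 0 <= x i) -> (forall i, 0 <= y i) -> 0 < t < 1 ->
  \sum_i x i `^ t * y i `^ (1 - t) <= (\sum_i x i) `^ t * (\sum_i y i) `^ (1 - t).
Proof.
move=> x0 y0 t01; have /andP[t0 t1] := t01.
have t1' : 0 < 1 - t by rewrite subr_gt0.
set X := \sum_i x i; set Y := \sum_i y i.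
have RHS0 : 0 <= X `^ t * Y `^ (1 - t) by rewrite mulr_ge0 ?powR_ge0.
have [X0|X0] := eqVneq X 0.
  rewrite big1 // => i _.
  by rewrite (psumr_eq0P (fun i _ => x0 i) X0) // powR0 ?mul0r ?gt_eqF.
have [Y0|Y0] := eqVneq Y 0.
  rewrite big1 // => i _.
  by rewrite (psumr_eq0P (fun i _ => y0 i) Y0) // powR0 ?mulr0 ?gt_eqF.
have Xp : 0 < X by rewrite lt_def X0 sumr_ge0.
have Yp : 0 < Y by rewrite lt_def Y0 sumr_ge0.
have X'0 : 0 <= X^-1 by rewrite invr_ge0 ltW.
have Y'0 : 0 <= Y^-1 by rewrite invr_ge0 ltW.
have rescale i : x i `^ t * y i `^ (1 - t) =
    X `^ t * Y `^ (1 - t) * ((x i / X) `^ t * (y i / Y) `^ (1 - t)).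
  have invX : X `^ t * X^-1 `^ t = 1.
    by rewrite -(powRM _ (ltW Xp) X'0) mulfV ?gt_eqF // powR1.
  have invY : Y `^ (1 - t) * Y^-1 `^ (1 - t) = 1.
    by rewrite -(powRM _ (ltW Yp) Y'0) mulfV ?gt_eqF // powR1.
  rewrite (powRM _ (x0 i) X'0) (powRM _ (y0 i) Y'0).
  move: (x i `^ t) (y i `^ (1 - t)) (X `^ t) (Y `^ (1 - t)) invX invY => a b u v hu hv.
  by transitivity (a * b * ((u * X^-1 `^ t) * (v * Y^-1 `^ (1 - t))));
    [rewrite hu hv !mulr1 | ring].
rewrite (eq_bigr _ (fun i _ => rescale i)) -mulr_sumr -[leRHS]mulr1 ler_wpM2l //.
apply: le_trans (ler_sum _ (fun i _ =>
  weighted_amgm (divr_ge0 (x0 i) (ltW Xp)) (divr_ge0 (y0 i) (ltW Yp)) t01)) _.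
rewrite big_split /= -!mulr_sumr -!mulr_suml -/X -/Y !mulfV ?gt_eqF //; lra.
Qed.

Lemma hoelder3_sum (I : finType) (x y z : I -> R) a b c :
  (forall i, 0 <= x i) -> (forall i, 0 <= y i) -> (forall i, 0 <= z i) ->
  0 < a -> 0 < b -> 0 < c -> a + b + c = 1 ->
  \sum_i x i `^ a * y i `^ b * z i `^ c
    <= (\sum_i x i) `^ a * (\sum_i y i) `^ b * (\sum_i z i) `^ c.
Proof.
move=> x0 y0 z0 a0 b0 c0 abc.
set s := a + b.
have s0 : 0 < s by rewrite addr_gt0.
have s01 : 0 < s < 1 by rewrite s0 /s; lra.
have as01 : 0 < a / s < 1 by rewrite divr_gt0 //= ltr_pdivrMr // mul1r /s; lra.
have bs : 1 - a / s = b / s by rewrite /s; field; lra.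
have cs : c = 1 - s by rewrite /s; lra.
pose w i := x i `^ (a / s) * y i `^ (1 - a / s).
have w0 i : 0 <= w i by rewrite mulr_ge0 ?powR_ge0.
have xyw i : x i `^ a * y i `^ b = w i `^ s.
  by rewrite /w powRM ?powR_ge0 // -!powRrM bs !mulfVK ?gt_eqF.
under eq_bigr => i _ do rewrite xyw.
rewrite cs.
apply: le_trans (hoelder_sum w0 z0 s01) _.
rewrite ler_wpM2r ?powR_ge0 //.
apply: le_trans (ge0_ler_powR (ltW s0) _ _ (hoelder_sum x0 y0 as01)) _.
- by rewrite nnegrE; apply: sumr_ge0 => i _; exact: w0.
- by rewrite nnegrE mulr_ge0 ?powR_ge0.
by rewrite powRM ?powR_ge0 // -!powRrM bs !mulfVK ?gt_eqF.
Qed.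

Lemma mulr_powR_split s t p q a b c : 0 <= s -> 0 <= t ->
  q * (a + b) = 1 -> p * (a + c) = 1 ->
  s * t = (s `^ q * t `^ p) `^ a * (s `^ q) `^ b * (t `^ p) `^ c.
Proof.
move=> s0 t0 qab pac.
have ab0 : a + b != 0 by apply/eqP => e; rewrite e mulr0 in qab; lra.
have ac0 : a + c != 0 by apply/eqP => e; rewrite e mulr0 in pac; lra.
have Es : (s `^ q) `^ a * (s `^ q) `^ b = s.
  by rewrite -(@powRD _ (s `^ q)) ?(negbTE ab0) // -powRrM qab powRr1.
have Et : (t `^ p) `^ a * (t `^ p) `^ c = t.
  by rewrite -(@powRD _ (t `^ p)) ?(negbTE ac0) // -powRrM pac powRr1.
rewrite powRM ?powR_ge0 // -[in LHS]Es -[in LHS]Et.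
by move: ((s `^ q) `^ a) ((s `^ q) `^ b) ((t `^ p) `^ a) ((t `^ p) `^ c) => *; ring.
Qed.

Lemma ler_sum_ord_prefix (F : nat -> R) k K : (k <= K)%N ->
  (forall i, 0 <= F i) -> \sum_(i < k) F i <= \sum_(i < K) F i.
Proof.
move=> kK F0; rewrite (big_ord_widen K F kK) big_mkcond /=.
by apply: ler_sum => i _; case: ifP.
Qed.

Lemma sum_conv_le_mul (F G : nat -> R) K :
  (forall i, 0 <= F i) -> (forall i, 0 <= G i) ->
  \sum_(k < K) \sum_(i < k.+1) F i * G (k - i)%N
    <= (\sum_(i < K) F i) * (\sum_(j < K) G j).
Proof.
move=> F0 G0.
under eq_bigr => k _ do rewrite (big_ord_widen K (fun i => F i * G (k - i)%N)) //.
rewrite (exchange_big_dep xpredT) //= mulr_suml; apply: ler_sum => i _.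
rewrite -mulr_sumr ler_wpM2l //.
rewrite -(big_mkord (fun k => i < k.+1)%N (fun k => G (k - i)%N)).
have -> : \sum_(0 <= k < K | (i < k.+1)%N) G (k - i)%N = \sum_(i <= k < K) G (k - i)%N.
  by rewrite big_geq_mkord [RHS]big_geq_mkord; apply: eq_bigl => k /=; rewrite andbT.
rewrite -{1}(add0n i) big_addn.
under eq_bigr do rewrite addnK.
by rewrite big_mkord ler_sum_ord_prefix ?leq_subr.
Qed.

Section young_convolution.
Variables (F G : nat -> R) (p q r : R).
Hypotheses (F_ge0 : forall i, 0 <= F i) (G_ge0 : forall i, 0 <= G i).
Hypotheses (p_gt1 : 1 < p) (q_gt1 : 1 < q) (r_gt0 : 0 < r).
Hypothesis pqr : r^-1 = p^-1 + q^-1 - 1.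

Let p_gt0 : 0 < p. Proof. exact: lt_trans p_gt1. Qed.
Let q_gt0 : 0 < q. Proof. exact: lt_trans q_gt1. Qed.

(* F i * G (k - i) = (F i^q G (k-i)^p)^(1/r) (F i^q)^(1-1/p) (G (k-i)^p)^(1-1/q):
   the exponents of F and G add up to 1/q and 1/p, and the three weights to 1. *)
Lemma conv_le_hoelder k :
  \sum_(i < k.+1) F i * G (k - i)%N <=
    (\sum_(i < k.+1) F i `^ q * G (k - i)%N `^ p) `^ r^-1 *
    (\sum_(i < k.+1) F i `^ q) `^ (1 - p^-1) *
    (\sum_(i < k.+1) G (k - i)%N `^ p) `^ (1 - q^-1).
Proof.
have abc : r^-1 + (1 - p^-1) + (1 - q^-1) = 1 by rewrite pqr; lra.
have qab : q * (r^-1 + (1 - p^-1)) = 1.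
  by rewrite (_ : _ + _ = q^-1) ?mulfV ?gt_eqF // pqr; lra.
have pac : p * (r^-1 + (1 - q^-1)) = 1.
  by rewrite (_ : _ + _ = p^-1) ?mulfV ?gt_eqF // pqr; lra.
under eq_bigr => i _ do rewrite (mulr_powR_split (F_ge0 i) (G_ge0 _) qab pac).
apply: hoelder3_sum abc => [i|i|i|||]; rewrite ?mulr_ge0 ?powR_ge0 ?invr_gt0 //.
all: by rewrite subr_gt0 invf_lt1.
Qed.

Theorem young_convolution K :
  (\sum_(k < K) (\sum_(i < k.+1) F i * G (k - i)%N) `^ r) `^ r^-1
    <= (\sum_(i < K) F i `^ q) `^ q^-1 * (\sum_(j < K) G j `^ p) `^ p^-1.
Proof.
set A := \sum_(i < K) F i `^ q; set B := \sum_(j < K) G j `^ p.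
pose U k := \sum_(i < k.+1) F i `^ q * G (k - i)%N `^ p.
pose C := A `^ (1 - p^-1) * B `^ (1 - q^-1).
have A_ge0 : 0 <= A by apply: sumr_ge0 => i _; exact: powR_ge0.
have B_ge0 : 0 <= B by apply: sumr_ge0 => i _; exact: powR_ge0.
have C_ge0 : 0 <= C by rewrite mulr_ge0 ?powR_ge0.
have conv_le k : (k < K)%N -> \sum_(i < k.+1) F i * G (k - i)%N <= U k `^ r^-1 * C.
  move=> kK; apply: le_trans (conv_le_hoelder k) _; rewrite -mulrA.
  apply: ler_wpM2l; first exact: powR_ge0.
  have rev : \sum_(i < k.+1) G (k - i)%N `^ p = \sum_(i < k.+1) G i `^ p.
    rewrite (reindex_inj rev_ord_inj); apply: eq_bigr => i _.
    by rewrite /= subSS subKn // -ltnS.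
  rewrite rev; apply: ler_pM; rewrite ?powR_ge0 //.
  - apply: ge0_ler_powR; rewrite ?nnegrE //.
    + by rewrite subr_ge0 invf_le1 // ltW.
    + by apply: sumr_ge0 => i _; exact: powR_ge0.
    + by rewrite /A; apply: (ler_sum_ord_prefix (F := fun i => F i `^ q)) => // i; exact: powR_ge0.
  - apply: ge0_ler_powR; rewrite ?nnegrE //.
    + by rewrite subr_ge0 invf_le1 // ltW.
    + by apply: sumr_ge0 => i _; exact: powR_ge0.
    + by rewrite /B; apply: (ler_sum_ord_prefix (F := fun i => G i `^ p)) => // i; exact: powR_ge0.
have sum_le : \sum_(k < K) (\sum_(i < k.+1) F i * G (k - i)%N) `^ r <= A * B * C `^ r.
  apply: le_trans (_ : \sum_(k < K) U k * C `^ r <= _).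
    apply: ler_sum => k _.
    have U_ge0 : 0 <= U k by apply: sumr_ge0 => i _; rewrite mulr_ge0 ?powR_ge0.
    apply: le_trans (ge0_ler_powR (ltW r_gt0) _ _ (conv_le k (ltn_ord k))) _.
    - by rewrite nnegrE; apply: sumr_ge0 => i _; exact: mulr_ge0.
    - by rewrite nnegrE mulr_ge0 ?powR_ge0.
    by rewrite powRM ?powR_ge0 // -powRrM mulVf ?gt_eqF // (powRr1 U_ge0).
  rewrite -mulr_suml ler_wpM2r ?powR_ge0 //.
  by apply: (sum_conv_le_mul (F := fun i => F i `^ q) (G := fun j => G j `^ p))
    => i; exact: powR_ge0.
apply: le_trans (ge0_ler_powR _ _ _ sum_le) _.
- by rewrite invr_ge0 ltW.
- by rewrite nnegrE; apply: sumr_ge0 => k _; exact: powR_ge0.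
- by rewrite nnegrE !mulr_ge0 ?powR_ge0.
rewrite (powRM _ (mulr_ge0 A_ge0 B_ge0) (powR_ge0 _ _)) (powRM _ A_ge0 B_ge0).
rewrite -powRrM mulfV ?gt_eqF // (powRr1 C_ge0) /C.
clearbody A B. (* otherwise rewriting with powRD unfolds and compares the two sums *)
have qE : r^-1 + (1 - p^-1) = q^-1 by rewrite pqr; lra.
have pE : r^-1 + (1 - q^-1) = p^-1 by rewrite pqr; lra.
have EA : A `^ q^-1 = A `^ r^-1 * A `^ (1 - p^-1).
  by rewrite -qE powRD // qE gt_eqF // invr_gt0 q_gt0.
have EB : B `^ p^-1 = B `^ r^-1 * B `^ (1 - q^-1).
  by rewrite -pE powRD // pE gt_eqF // invr_gt0 p_gt0.
by rewrite EA EB mulrACA.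
Qed.

End young_convolution.

End powR_inequalities.

Section binomial_sums.
Variable R : realType.

Lemma sum_trapezoid (u : nat -> R) N :
  \sum_(j < N) (u j.+1 + u j) / 2 = \sum_(k < N.+1) u k - (u 0%N + u N) / 2.
Proof.
rewrite -mulr_suml big_split /=.
set S := \sum_(k < N.+1) u k.
have -> : \sum_(j < N) u j.+1 = S - u 0%N by rewrite /S big_ord_recl addrC addKr.
have -> : \sum_(j < N) u j = S - u N by rewrite /S big_ord_recr /= addrK.
by field.
Qed.

(* No parity assumption on N is needed: when two consecutive binomials coincide
   the summand is 0 (x / 0 = 0), which the Hermite-Hadamard bound still covers. *)
Lemma binomial_secant_sum_le N (r : R) : 1 < r ->
  0 <= 2 / (r + 1) +
       \sum_(j < N) (('C(N, j.+1))%:R `^ (r + 1) - ('C(N, j))%:R `^ (r + 1)) /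
                    ((r + 1) * (('C(N, j.+1))%:R - ('C(N, j))%:R))
    <= \sum_(k < N.+1) ('C(N, k))%:R `^ r.
Proof.
move=> r1.
have binN_gt0 k : (k <= N)%N -> 0 < ('C(N, k))%:R :> R by rewrite ltr0n bin_gt0.
have hh (j : 'I_N) := hermite_hadamard_powR (binN_gt0 j.+1 (ltn_ord j))
  (binN_gt0 j (ltnW (ltn_ord j))) r1.
set T := \sum_(j < N) _.
have T_ge0 : 0 <= T by apply: sumr_ge0 => j _; case/andP: (hh j).
have T_le : T <= \sum_(j < N) (('C(N, j.+1))%:R `^ r + ('C(N, j))%:R `^ r) / 2.
  by apply: ler_sum => j _; case/andP: (hh j).
rewrite (sum_trapezoid (fun k => ('C(N, k))%:R `^ r)) /= bin0 binn powR1 in T_le.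
have two_le : 2 / (r + 1) <= 1 by rewrite ler_pdivrMr ?mul1r; lra.
apply/andP; split; [apply: addr_ge0; first apply: divr_ge0 | ]; lra.
Qed.

Lemma sum_binomial_powR_widen m K (q : R) : (m < K)%N -> 0 < q ->
  \sum_(i < K) ('C(m, i))%:R `^ q = \sum_(i < m.+1) ('C(m, i))%:R `^ q.
Proof.
move=> mK q0; rewrite [RHS](big_ord_widen K (fun i => ('C(m, i))%:R `^ q)) //.
rewrite [RHS]big_mkcond; apply: eq_bigr => i _; case: ltnP => // mi.
by rewrite bin_small // powR0 ?gt_eqF.
Qed.

End binomial_sums.

Theorem mainTheorem9 (R : realType) (m n : nat) (p q r : R) :
  (m = n %[mod 2])%N ->
  1 < p -> 1 < q -> 1 < r ->
  r^-1 = p^-1 + q^-1 - 1 ->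
  (2 / (r + 1) +
     \sum_(j < (m + n)%N)
       (('C(m + n, j.+1))%:R `^ (r + 1) - ('C(m + n, j))%:R `^ (r + 1)) /
       ((r + 1) * (('C(m + n, j.+1))%:R - ('C(m + n, j))%:R))) `^ r^-1
  <= (\sum_(j < m.+1) ('C(m, j))%:R `^ q) `^ q^-1 *
     (\sum_(j < n.+1) ('C(n, j))%:R `^ p) `^ p^-1.
Proof.
move=> _ p1 q1 r1 pqr.
have r0 : 0 < r := lt_trans ltr01 r1.
have /andP[L_ge0 L_le] := binomial_secant_sum_le (m + n) r1.
apply: le_trans (ge0_ler_powR _ _ _ L_le) _.
- by rewrite invr_ge0 ltW.
- by rewrite nnegrE.
- by rewrite nnegrE; apply: sumr_ge0 => k _; exact: powR_ge0.
have vandermonde k :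
    ('C(m + n, k))%:R = \sum_(i < k.+1) ('C(m, i))%:R * ('C(n, k - i))%:R :> R.
  by rewrite -binomial.Vandermonde natr_sum; apply: eq_bigr => i _; rewrite natrM.
under eq_bigr do rewrite vandermonde.
apply: le_trans (young_convolution (F := fun i => ('C(m, i))%:R)
  (G := fun j => ('C(n, j))%:R) (fun _ => ler0n _ _) (fun _ => ler0n _ _)
  p1 q1 r0 pqr (m + n).+1) _.
by rewrite !sum_binomial_powR_widen ?ltnS ?leq_addr ?leq_addl // (lt_trans ltr01).
Qed.
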